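(* Consider the hierarchical Gaussian $K$-armed bandit and the algorithm HierTS described in the context. Fix any round $t$, and let $\psi_t = (\psi_t(1), \dots, \psi_t(L_t))$ be the list of nodes on the path from the root $\psi_t(1) = 1$ to the action node $\psi_t(L_t) = A_t$. Then the marginal posterior variance of $\theta_{*, A_t}$ satisfies \[ \mathrm{Var}(\theta_{*, A_t} \mid H_t) = \sum_{i=1}^{L_t} \bigg(\prod_{j=i+1}^{L_t} \frac{\hat{\sigma}_{t, \psi_t(j)}^4}{\sigma_{0, \psi_t(j)}^4}\bigg) \hat{\sigma}_{t, \psi_t(i)}^2\,. \]
   Context: Tree and model. Let $\mathcal{T}$ be a rooted tree with node set $\mathcal{V}$, root labeled $1$, in which every internal node has at least $2$ children. For a node $i \neq 1$, $\mathsf{pa}(i)$ is its parent; $\mathsf{ch}(i)$ is the set of children of $i$. The leaves form the action set $\mathcal{A}$, $|\mathcal{A}| = K$. Node parameters $\theta_{*, i} \in \mathbb{R}$ are generated as $\theta_{*, 1} \sim \mathcal{N}(\mu_1, \sigma_{0,1}^2)$ and, for $i \neq 1$, $\theta_{*, i} \mid \theta_{*, \mathsf{pa}(i)} \sim \mathcal{N}(\theta_{*, \mathsf{pa}(i)}, \sigma_{0,i}^2)$, with known $\mu_1$ and $\sigma_{0,i} > 0$. In each round $t$ the agent takes $A_t \in \mathcal{A}$ and observes $Y_t \sim \mathcal{N}(\theta_{*, A_t}, \sigma^2)$ (independent noise, known $\sigma > 0$). The history is $H_t = (A_\ell, Y_\ell)_{\ell < t}$. HierTS samples $\Theta_t$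 exactly from the posterior of $(\theta_{*,i})_{i \in \mathcal{V}}$ given $H_t$ and takes $A_t = \arg\max_{a \in \mathcal{A}} \theta_{t,a}$. Conditional posterior variances. For a node $i \neq 1$, $\hat{\sigma}_{t,i}^2$ is the variance of $\theta_{*, i}$ conditioned on $H_t$ and on $\theta_{*, \mathsf{pa}(i)}$ (it does not depend on the value of the parent); for the root, $\hat{\sigma}_{t,1}^2 = \mathrm{Var}(\theta_{*,1} \mid H_t)$. Explicitly, with $\mathcal{S}_{t,a} = \{\ell < t : A_\ell = a\}$: for an action node $a$, $\hat{\sigma}_{t,a}^{-2} = \sigma_{0,a}^{-2} + |\mathcal{S}_{t,a}| \sigma^{-2}$; for a non-action node $i$, $\hat{\sigma}_{t,i}^{-2} = \sigma_{0,i}^{-2} + \sum_{j \in \mathsf{ch}(i)} \tilde{\sigma}_{t,j}^{-2}$, where recursively $\tilde{\sigma}_{t,j}^{2} = \sigma_{0,j}^2 + \sigma^2/|\mathcal{S}_{t,j}|$ for an action node $j$ (with $\tilde{\sigma}_{t,j}^{-2} = 0$ if $|\mathcal{S}_{t,j}| = 0$) and $\tilde{\sigma}_{t,j}^{2} = \sigma_{0,j}^2 + \big(\sum_{k \in \mathsf{ch}(j)} \tilde{\sigma}_{t,k}^{-2}\big)^{-1}$ for a non-action node $j$. *)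

From mathcomp Require Import all_boot all_order all_algebra.
Set Implicit Arguments. Unset Strict Implicit. Unset Printing Implicit Defensive.
Import Order.TTheory GRing.Theory Num.Theory.
Local Open Scope ring_scope.

Section Tree.
Variables (V : finType) (root : V) (pa : V -> V).

(* children of i (the root is its own parent by convention, never a child) *)
Definition children (i : V) : seq V :=
  [seq j <- enum V | (pa j == i) && (j != root)].

(* leaves = action nodes *)
Definition is_leaf (i : V) : bool := nilp (children i).

Definition is_rooted_tree : Prop :=
  [/\ pa root = root,
      (forall i, exists k, iter k pa i = root) &
      (forall i, ~~ is_leaf i -> (1 < size (children i))%N)].

(* k is an ancestor of i (or i itself) *)
Definition ancb (k i : V) : bool := [exists n : 'I_#|V|, iter n pa i == k].

Definition depth (i : V) : nat :=
  find (fun n => iter n pa i == root) (iota 0 #|V|).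

(* psi = [root = psi(1); ...; psi(L) = i], the path from the root to i *)
Definition path_from_root (i : V) : seq V := rev (traject pa i (depth i).+1).

End Tree.

Section Model.
Variables (V : finType) (root : V) (pa : V -> V).
Variables (R : realFieldType) (sigma0 : V -> R) (sigma : R).
(* acts = (A_1, ..., A_{t-1}) : the actions of the history H_t *)
Variable acts : seq V.

Definition nobs (a : V) : nat := count_mem a acts.

(* sigma_tilde^{-2} computed from p = (data precision of the subtree):
   sigma_tilde^2 = sigma0^2 + p^{-1}, with sigma_tilde^{-2} = 0 if p = 0 *)
Definition tilde_inv (p s0 : R) : R := if p == 0 then 0 else (s0 ^+ 2 + p^-1)^-1.

Fixpoint dprec_fuel (fuel : nat) (i : V) : R :=
  match fuel with
  | 0 => 0
  | f.+1 =>
    if is_leaf root pa i then (nobs i)%:R / sigma ^+ 2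
    else \sum_(j <- children root pa i) tilde_inv (dprec_fuel f j) (sigma0 j)
  end.

Definition dprec (i : V) : R := dprec_fuel #|V| i.

Definition hat_var (i : V) : R := ((sigma0 i ^+ 2)^-1 + dprec i)^-1.

(* prior covariance Cov(theta_i, theta_j) = sum over common ancestors k of
   sigma_{0,k}^2 (from theta_i = theta_1 + sum of independent increments) *)
Definition prior_cov (i j : V) : R :=
  \sum_(k | ancb pa k i && ancb pa k j) sigma0 k ^+ 2.

Definition obs_cov : 'M[R]_(size acts) :=
  \matrix_(l, m) (prior_cov (nth root acts l) (nth root acts m)
                  + (l == m)%:R * sigma ^+ 2).

Definition cross_cov (a : V) : 'cV[R]_(size acts) :=
  \col_l prior_cov a (nth root acts l).

(* Var(theta_a | H_t): Gaussian conditioning (Schur complement) *)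
Definition post_var (a : V) : R :=
  prior_cov a a - ((cross_cov a)^T *m invmx obs_cov *m cross_cov a) ord0 ord0.

End Model.

(* Given H_t, the parameters again form a Gaussian tree,
     theta_v = shrink v * theta_(pa v) + eps_v,   Var eps_v = hat_sigma_{t,v}^2,
   with shrink v = hat_sigma_{t,v}^2 / sigma_{0,v}^2, so Var(theta_a | H_t) is the diagonal of the
   covariance [tree_cov] of this model, which unrolls along the root path of a into the claimed sum.
   Rather than deriving the conditional model, we check that x v := tree_cov v a solves the normal
   equations of Gaussian conditioning,
     x v + sum_l Cov(theta_v, Y_l) * x (A_l) / sigma^2 = Cov(theta_v, theta_a)   for all nodes v.
   Both sides are sums over the ancestors k of v, so it suffices to match the increments
   x k - x (pa k); this follows from shrink k * (1 + sigma_{0,k}^2 * dprec k) = 1 and an induction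
   over the subtree of k. The observation covariance is sigma^2 I plus a Gram matrix, hence
   invertible, and the Schur complement defining Var(theta_a | H_t) then equals x a. *)

From mathcomp Require Import all_boot all_order all_algebra ring lra.
Set Implicit Arguments. Unset Strict Implicit. Unset Printing Implicit Defensive.
Import Order.TTheory GRing.Theory Num.Theory.

Section RootedTree.
Variables (V : finType) (root : V) (pa : V -> V).
Hypothesis tree : is_rooted_tree root pa.

Local Notation depth := (depth root pa).
Local Notation children := (children root pa).

Lemma pa_root : pa root = root.
Proof. by case: tree. Qed.

Lemma iter_pa_root n : iter n pa root = root.
Proof. by elim: n => //= n ->; rewrite pa_root. Qed.

(* Pigeonhole: a shortest path to the root repeats no node. *)
Lemma reach_root_lt_card i : exists2 n, n < #|V| & iter n pa i = root.
Proof.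
case: tree => _ reach _.
have reach_b : exists n, iter n pa i == root.
  by have [k iter_k] := reach i; exists k; apply/eqP.
case: (ex_minnP reach_b) => k /eqP iter_k k_min; exists k => //.
have : uniq (traject pa i k.+1).
  rewrite looping_uniq; apply/negP => /trajectP [j lt_jk iter_j].
  by have := k_min j; rewrite -iter_j iter_k eqxx leqNgt lt_jk => /(_ isT).
by move/card_uniqP; rewrite size_traject => <-; apply: max_card.
Qed.

Lemma depth_spec i : [/\ depth i < #|V|, iter (depth i) pa i = root &
  forall n, n < depth i -> iter n pa i != root].
Proof.
have [n lt_n iter_n] := reach_root_lt_card i.
have has_root : has (fun n => iter n pa i == root) (iota 0 #|V|).
  by apply/hasP; exists n; [rewrite mem_iota | apply/eqP].
have lt_depth : depth i < #|V| by rewrite /depth -{2}(size_iota 0 #|V|) -has_find.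
split=> // [|m lt_m].
  by have := nth_find 0 has_root; rewrite nth_iota // add0n => /eqP.
by have := before_find 0 lt_m; rewrite nth_iota ?add0n ?(ltn_trans lt_m) // => ->.
Qed.

Lemma depth_lt_card i : depth i < #|V|.
Proof. by case: (depth_spec i). Qed.

Lemma iter_depth i : iter (depth i) pa i = root.
Proof. by case: (depth_spec i). Qed.

Lemma depth_min i n : iter n pa i = root -> depth i <= n.
Proof.
move=> iter_n; rewrite leqNgt; apply/negP => lt_n.
by case: (depth_spec i) => _ _ /(_ _ lt_n); rewrite iter_n eqxx.
Qed.

Lemma depth_root : depth root = 0.
Proof. by apply/eqP; rewrite -leqn0; apply: depth_min. Qed.

Lemma depth_eq0 i : depth i = 0 -> i = root.
Proof. by move=> d0; have := iter_depth i; rewrite d0. Qed.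

Lemma depth_pa i : i != root -> depth i = (depth (pa i)).+1.
Proof.
move=> i_neq_root; have d_gt0 : 0 < depth i.
  by rewrite lt0n; apply: contra i_neq_root => /eqP/depth_eq0 ->.
apply/eqP; rewrite eqn_leq; apply/andP; split.
  by apply: depth_min; rewrite iterSr iter_depth.
by rewrite -(prednK d_gt0) ltnS; apply: depth_min; rewrite -iterSr prednK // iter_depth.
Qed.

Lemma depth_iter n i : n <= depth i -> depth (iter n pa i) = depth i - n.
Proof.
elim: n => [|n IHn] le_n; first by rewrite subn0.
have iter_neq_root : iter n pa i != root by case: (depth_spec i) => _ _; apply.
have := depth_pa iter_neq_root; rewrite IHn ?(ltnW le_n) // => d_eq.
by rewrite iterS subnS d_eq.
Qed.

Lemma iter_pa_ge_depth n i : depth i <= n -> iter n pa i = root.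
Proof. by move=> le_n; rewrite -(subnK le_n) iterD iter_depth iter_pa_root. Qed.

Lemma root_ind (P : V -> Prop) :
  P root -> (forall v, v != root -> P (pa v) -> P v) -> forall v, P v.
Proof.
move=> P_root P_pa; suff P_depth n v : depth v = n -> P v by move=> v; exact: P_depth.
elim: n v => [|n IHn] v d_v; first by rewrite (depth_eq0 d_v).
have v_neq_root : v != root by apply: contraPneq d_v => ->; rewrite depth_root.
by apply: P_pa => //; apply: IHn; move: d_v; rewrite depth_pa // => -[].
Qed.

Lemma ancbP k i : reflect (exists n, iter n pa i = k) (ancb pa k i).
Proof.
apply: (iffP existsP) => [[n /eqP <-]|[n iter_n]]; first by exists n.
case: (leqP n (depth i)) => [le_n|lt_n].
  by exists (Ordinal (leq_ltn_trans le_n (depth_lt_card i))); apply/eqP.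
exists (Ordinal (depth_lt_card i)); apply/eqP.
by rewrite /= iter_depth -iter_n iter_pa_ge_depth // ltnW.
Qed.

Lemma ancb_refl i : ancb pa i i.
Proof. by apply/ancbP; exists 0. Qed.

Lemma ancb_root i : ancb pa root i.
Proof. by apply/ancbP; exists (depth i); rewrite iter_depth. Qed.

Lemma ancb_trans k j i : ancb pa k j -> ancb pa j i -> ancb pa k i.
Proof. by move=> /ancbP [n <-] /ancbP [m <-]; apply/ancbP; exists (n + m); rewrite iterD. Qed.

Lemma ancb_pa i : ancb pa (pa i) i.
Proof. by apply/ancbP; exists 1. Qed.

Lemma ancb_iter_depth k i : ancb pa k i -> k = iter (depth i - depth k) pa i.
Proof.
move=> /ancbP [n <-]; case: (leqP n (depth i)) => [le_n|lt_n].
  by rewrite depth_iter // subKn.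
by rewrite !iter_pa_ge_depth ?depth_root ?subn0 // ltnW.
Qed.

Lemma ancb_depth_le k i : ancb pa k i -> depth k <= depth i.
Proof.
move=> /ancbP [n <-]; case: (leqP n (depth i)) => [le_n|lt_n].
  by rewrite depth_iter // leq_subr.
by rewrite iter_pa_ge_depth ?depth_root // ltnW.
Qed.

Lemma ancb_depth_inj k k' i : ancb pa k i -> ancb pa k' i -> depth k = depth k' -> k = k'.
Proof. by move=> /ancb_iter_depth {2}-> /ancb_iter_depth {2}-> ->. Qed.

Lemma ancb_paE k i : i != root -> ancb pa k i = (k == i) || ancb pa k (pa i).
Proof.
move=> i_neq_root; apply/idP/idP => [/ancbP [[|n] <-]|]; first by rewrite eqxx.
  by rewrite iterSr; apply/orP; right; apply/ancbP; exists n.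
by case/orP => [/eqP ->|/ancb_trans]; [exact: ancb_refl | apply; exact: ancb_pa].
Qed.

Lemma ancb_rootE k : ancb pa k root = (k == root).
Proof. by apply/idP/eqP => [/ancbP [n <-]|->]; [exact: iter_pa_root | exact: ancb_refl]. Qed.

Lemma ancb_pa_self i : i != root -> ancb pa i (pa i) = false.
Proof. by move=> i_neq_root; apply/negbTE/negP => /ancb_depth_le; rewrite depth_pa // ltnn. Qed.

Lemma big_ancb_root (Z : Type) (idx : Z) (op : Monoid.com_law idx) (F : V -> Z) :
  \big[op/idx]_(k | ancb pa k root) F k = F root.
Proof. by rewrite (eq_bigl (pred1 root)) ?big_pred1_eq // => k; rewrite ancb_rootE. Qed.

Lemma big_ancb_pa (Z : Type) (idx : Z) (op : Monoid.com_law idx) (F : V -> Z) v :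
  v != root ->
  \big[op/idx]_(k | ancb pa k v) F k = op (F v) (\big[op/idx]_(k | ancb pa k (pa v)) F k).
Proof.
move=> v_neq_root; rewrite (bigD1 v) ?ancb_refl //=; congr (op _ _); apply: eq_bigl => k.
by rewrite ancb_paE //; case: eqVneq => [->|_] /=; rewrite ?ancb_pa_self ?andbT.
Qed.

Lemma sum_ancb_telescope (Z : zmodType) (f g : V -> Z) :
  f root = g root -> (forall v, v != root -> (f v - f (pa v) = g v)%R) ->
  forall v, f v = (\sum_(k | ancb pa k v) g k)%R.
Proof.
move=> f_root f_pa; elim/root_ind => [|v v_neq_root IHv]; first by rewrite big_ancb_root.
by rewrite big_ancb_pa //= -IHv -f_pa // subrK.
Qed.

Lemma mem_children c k : (c \in children k) = (pa c == k) && (c != root).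
Proof. by rewrite mem_filter mem_enum andbT. Qed.

Lemma uniq_children k : uniq (children k).
Proof. by rewrite filter_uniq // enum_uniq. Qed.

Lemma depth_child c k : c \in children k -> depth c = (depth k).+1.
Proof. by rewrite mem_children => /andP [/eqP <- c_neq_root]; rewrite depth_pa. Qed.

Lemma tree_ind (P : V -> Prop) :
  (forall v, (forall c, c \in children v -> P c) -> P v) -> forall v, P v.
Proof.
move=> P_children; suff P_height n v : #|V| - depth v <= n -> P v.
  by move=> v; exact: (P_height _ v (leqnn _)).
elim: n v => [|n IHn] v le_n.
  by have := depth_lt_card v; rewrite -subn_gt0 lt0n -leqn0 le_n.
apply: P_children => c c_child; apply: IHn; rewrite (depth_child c_child) subnS.
by rewrite -ltnS prednK // subn_gt0 depth_lt_card.
Qed.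

Lemma ancb_child k c u : c \in children k -> ancb pa c u -> ancb pa k u.
Proof. by rewrite mem_children => /andP [/eqP <- _]; apply: ancb_trans (ancb_pa c). Qed.

Lemma ancb_child_exists k u : ancb pa k u -> u != k ->
  exists2 c, c \in children k & ancb pa c u.
Proof.
move=> /ancbP [n iter_n] u_neq_k; have reach_k : exists n, iter n pa u == k.
  by exists n; apply/eqP.
case: (ex_minnP reach_k) => -[/eqP /= u_eq_k|m /eqP iter_m m_min].
  by rewrite u_eq_k eqxx in u_neq_k.
exists (iter m pa u); last by apply/ancbP; exists m.
rewrite mem_children -iterS iter_m eqxx /=.
apply/eqP => iter_root; have := m_min m; rewrite ltnn -iter_m /= iter_root pa_root eqxx.
by move/(_ isT).
Qed.

Lemma ancb_child_unique k c c' u : c \in children k -> c' \in children k ->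
  ancb pa c u -> ancb pa c' u -> c = c'.
Proof.
move=> c_child c'_child c_anc c'_anc; apply: ancb_depth_inj c_anc c'_anc _.
by rewrite (depth_child c_child) (depth_child c'_child).
Qed.

Lemma ancb_children (R : pzSemiRingType) k u :
  ((ancb pa k u)%:R = (u == k)%:R + \sum_(c <- children k) (ancb pa c u)%:R :> R)%R.
Proof.
case: (eqVneq u k) => [->|u_neq_k].
  rewrite ancb_refl big1_seq ?addr0 // => c /andP [_ c_child].
  suff /negbTE -> : ~~ ancb pa c k by [].
  by apply/negP => /ancb_depth_le; rewrite (depth_child c_child) ltnn.
rewrite add0r; case: (boolP (ancb pa k u)) => [k_anc|k_nanc]; last first.
  by rewrite big1_seq // => c /andP [c_anc c_child]; rewrite (contraNF (ancb_child c_child)).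
have [c0 c0_child c0_anc] := ancb_child_exists k_anc u_neq_k.
rewrite (bigD1_seq c0) ?uniq_children //= c0_anc big1_seq ?addr0 // => c /andP [c_neq c_child].
suff /negbTE -> : ~~ ancb pa c u by [].
by apply: contra c_neq => c_anc; rewrite (ancb_child_unique c_child c0_child c_anc c0_anc).
Qed.

Lemma path_from_root_root : path_from_root root pa root = [:: root].
Proof. by rewrite /path_from_root depth_root. Qed.

Lemma path_from_root_pa v : v != root ->
  path_from_root root pa v = rcons (path_from_root root pa (pa v)) v.
Proof. by move=> v_neq_root; rewrite /path_from_root (depth_pa v_neq_root) /= rev_cons. Qed.

End RootedTree.

Local Open Scope ring_scope.

Section PsdMatrices.
Variable R : realFieldType.

Lemma mulmx_trE n (z : 'rV[R]_n) : (z *m z^T) 0 0 = \sum_l z 0 l ^+ 2.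
Proof. by rewrite mxE; apply: eq_bigr => l _; rewrite mxE expr2. Qed.

Lemma mulmx_tr_eq0 n (z : 'rV[R]_n) : ((z *m z^T) 0 0 == 0) = (z == 0).
Proof.
rewrite mulmx_trE psumr_eq0 => [|l _]; last exact: sqr_ge0.
apply/allP/eqP => [z0|-> l _]; last by rewrite mxE sqrf_eq0 eqxx.
apply/matrixP => i l; rewrite ord1 mxE; apply/eqP; rewrite -sqrf_eq0.
exact: (implyP (z0 l (mem_index_enum _))).
Qed.

Lemma gram_quadE (I : finType) n (w : I -> R) (f : I -> 'I_n -> R) (z : 'rV[R]_n) :
  (z *m (\matrix_(l, m) \sum_k w k * (f k l * f k m)) *m z^T) 0 0 =
  \sum_k w k * (\sum_l z 0 l * f k l) ^+ 2.
Proof.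
rewrite mxE; under eq_bigr => m _ do rewrite !mxE mulr_suml.
under eq_bigr => m _ do under eq_bigr => l _ do rewrite mxE mulr_sumr mulr_suml.
rewrite (eq_bigr (fun m => \sum_k \sum_l z 0 l * (w k * (f k l * f k m)) * z 0 m));
  last by move=> m _; rewrite exchange_big.
rewrite exchange_big; apply: eq_bigr => k _.
rewrite expr2 big_distrlr mulr_sumr exchange_big /=.
by apply: eq_bigr => m _; rewrite mulr_sumr; apply: eq_bigr => l _; ring.
Qed.

Lemma gram_psd (I : finType) n (w : I -> R) (f : I -> 'I_n -> R) (z : 'rV[R]_n) :
  (forall k, 0 <= w k) ->
  0 <= (z *m (\matrix_(l, m) \sum_k w k * (f k l * f k m)) *m z^T) 0 0.
Proof. by move=> w_ge0; rewrite gram_quadE sumr_ge0 // => k _; rewrite mulr_ge0 ?sqr_ge0. Qed.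

Lemma psd_add_scalar_unitmx n (C : 'M[R]_n) (s : R) :
  0 < s -> (forall z : 'rV_n, 0 <= (z *m C *m z^T) 0 0) -> C + s%:M \in unitmx.
Proof.
move=> s_gt0 C_psd; rewrite unitmxE unitfE; apply/negP => /det0P [z z_neq0 zCs0].
have : (z *m (C + s%:M) *m z^T) 0 0 = 0 by rewrite zCs0 mul0mx mxE.
rewrite mulmxDr mulmxDl mul_mx_scalar -scalemxAl.
rewrite [((_ + _) : 'M[R]_1) 0 0]mxE [((_ *: _) : 'M[R]_1) 0 0]mxE => quad0.
have norm_ge0 : 0 <= (z *m z^T) 0 0 by rewrite mulmx_trE sumr_ge0 // => l _; exact: sqr_ge0.
have C_ge0 := C_psd z.
suff : (z *m z^T) 0 0 == 0 by rewrite mulmx_tr_eq0 (negbTE z_neq0).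
by rewrite eq_le norm_ge0 andbT -(pmulr_rle0 _ s_gt0); lra.
Qed.

End PsdMatrices.

Lemma invmx_mulmx_solve (F : fieldType) n (S : 'M[F]_n) (k y : 'cV[F]_n) (c : F) :
  S \in unitmx -> c != 0 -> S *m y = c *: k -> invmx S *m k = c^-1 *: y.
Proof. by move=> S_unit c_neq0 Sy; rewrite -[k](scalerK c_neq0) -Sy -scalemxAr mulKmx. Qed.

(* Covariances in the Gaussian tree model theta_v = w v * theta_(pa v) + eps_v with independent
   eps_v of variance nu v; [path_gain i v] is the coefficient of theta_i in theta_v. *)
Section TreeCovariance.
Variables (V : finType) (root : V) (pa : V -> V).
Hypothesis tree : is_rooted_tree root pa.
Variables (R : comPzRingType) (w nu : V -> R).

Definition path_gain (i v : V) : R := \prod_(j | ancb pa j v && ~~ ancb pa j i) w j.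

Definition tree_cov (v u : V) : R :=
  \sum_(i | ancb pa i v && ancb pa i u) path_gain i v * path_gain i u * nu i.

Lemma path_gain_refl v : path_gain v v = 1.
Proof. by rewrite /path_gain big_pred0 // => j; rewrite andbN. Qed.

Lemma path_gain_trans i j v : ancb pa i j -> ancb pa j v ->
  path_gain i v = path_gain i j * path_gain j v.
Proof.
move=> i_j j_v; rewrite /path_gain (bigID (ancb pa ^~ j)) /=; congr (_ * _).
  apply: eq_bigl => k; case: (boolP (ancb pa k j)) => [k_j|_]; last by rewrite andbF.
  by rewrite (ancb_trans tree k_j j_v) andbT.
apply: eq_bigl => k; case: (boolP (ancb pa k j)) => [_|k_nj]; first by rewrite !andbF.
by rewrite (contraNN (fun k_i => ancb_trans tree k_i i_j) k_nj) !andbT.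
Qed.

Lemma path_gain_pa v : v != root -> path_gain (pa v) v = w v.
Proof.
move=> v_neq_root; rewrite /path_gain (eq_bigl (pred1 v)) ?big_pred1_eq // => j.
rewrite (ancb_paE tree) //=; case: eqVneq => [->|_] /=; first by rewrite (ancb_pa_self tree).
by rewrite andbN.
Qed.

Lemma tree_cov_ancb v u : ancb pa v u -> tree_cov v u = path_gain v u * tree_cov v v.
Proof.
move=> v_u; rewrite /tree_cov mulr_sumr; apply: eq_big => [i|i /andP [i_v _]].
  by rewrite andbb; apply: andb_idr => i_v; exact: (ancb_trans tree i_v v_u).
by rewrite (path_gain_trans i_v v_u); ring.
Qed.

Lemma tree_cov_pa v u : v != root -> ~~ ancb pa v u -> tree_cov v u = w v * tree_cov (pa v) u.
Proof.
move=> v_neq_root v_nu; apply: esym; rewrite /tree_cov mulr_sumr.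
apply: eq_big => [i|i /andP [i_pv _]].
  rewrite (ancb_paE tree i v_neq_root); case: eqVneq => [->|_] //=.
  by rewrite (ancb_pa_self tree) // (negbTE v_nu).
by rewrite (path_gain_trans i_pv (ancb_pa tree v)) path_gain_pa //; ring.
Qed.

Lemma tree_cov_root : tree_cov root root = nu root.
Proof.
rewrite /tree_cov (eq_bigl (ancb pa ^~ root)) => [|i]; last exact: andbb.
by rewrite (big_ancb_root tree) // path_gain_refl !mul1r.
Qed.

Lemma tree_cov_pa_diag v : v != root ->
  tree_cov v v = nu v + w v ^+ 2 * tree_cov (pa v) (pa v).
Proof.
move=> v_neq_root; rewrite /tree_cov !(eq_bigl _ _ (fun i => andbb _)).
rewrite (big_ancb_pa tree) //= path_gain_refl !mul1r mulr_sumr; congr (_ + _).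
apply: eq_bigr => i i_pv.
by rewrite (path_gain_trans i_pv (ancb_pa tree v)) path_gain_pa //; ring.
Qed.

Lemma tree_cov_path v : let psi := path_from_root root pa v in
  tree_cov v v = \sum_(i < size psi)
    (\prod_(i.+1 <= j < size psi) w (nth root psi j) ^+ 2) * nu (nth root psi i).
Proof.
elim/(root_ind tree): v => [|v v_neq_root IHv] psi.
  by rewrite /psi (path_from_root_root tree) big_ord1 big_geq // mul1r tree_cov_root.
rewrite /psi (path_from_root_pa tree) // size_rcons big_ord_recr /= big_geq // mul1r.
rewrite nth_rcons ltnn eqxx addrC tree_cov_pa_diag // IHv mulr_sumr; congr (_ + _).
apply: eq_bigr => i _; rewrite big_nat_recr //= nth_rcons ltnn eqxx [in RHS]nth_rcons ltn_ord.
rewrite mulrA [w v ^+ 2 * _]mulrC; congr (_ * _ * _).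
by apply: eq_big_nat => j /andP [_ lt_j]; rewrite nth_rcons lt_j.
Qed.

End TreeCovariance.

Lemma sumr_eq_count (R : pzSemiRingType) (T : eqType) (r : seq T) (k : T) (F : T -> R) :
  \sum_(u <- r) (u == k)%:R * F u = (count_mem k r)%:R * F k.
Proof.
elim: r => [|u r IHr]; first by rewrite big_nil mul0r.
by rewrite big_cons IHr /= natrD mulrDl; case: eqVneq => [->|_]; rewrite ?mul1r ?mul0r.
Qed.

Section HierarchicalPosterior.
Variables (V : finType) (root : V) (pa : V -> V).
Variables (R : realFieldType) (sigma0 : V -> R) (sigma : R) (acts : seq V).
Hypothesis tree : is_rooted_tree root pa.
Hypothesis sigma0_gt0 : forall i, 0 < sigma0 i.
Hypothesis sigma_gt0 : 0 < sigma.
Hypothesis acts_leaves : all (is_leaf root pa) acts.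

Local Notation children := (children root pa).
Local Notation depth := (depth root pa).
Let q v := sigma0 v ^+ 2.
Let s := sigma ^+ 2.
Let D := dprec root pa sigma0 sigma acts.
Let tau v := tilde_inv (D v) (sigma0 v).
Let h := hat_var root pa sigma0 sigma acts.

Definition shrink (v : V) : R := h v / sigma0 v ^+ 2.

Lemma dprec_fuel_stable f i : (#|V| <= depth i + f)%N ->
  dprec_fuel root pa sigma0 sigma acts f i = dprec_fuel root pa sigma0 sigma acts f.+1 i.
Proof.
elim: f i => [|f IHf] i le_card.
  by have := depth_lt_card tree i; rewrite ltnNge -(addn0 (depth i)) le_card.
rewrite [LHS]/= [RHS]/=; case: ifP => // _; apply: eq_big_seq => c c_child.
by congr tilde_inv; apply: IHf; rewrite (depth_child tree c_child) addSn -addnS.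
Qed.

Lemma dprec_children v : D v = (nobs acts v)%:R / s + \sum_(c <- children v) tau c.
Proof.
have nobs_internal : ~~ is_leaf root pa v -> nobs acts v = 0%N.
  move=> v_internal; apply/count_memPn; apply: contra v_internal.
  exact: (allP acts_leaves).
rewrite /D /dprec; have : (0 < #|V|)%N by apply: leq_ltn_trans (depth_lt_card tree v).
case card_V: #|V| => [//|n] _ /=; case: ifP => [/nilP -> | /negbT/nobs_internal ->].
  by rewrite big_nil addr0.
rewrite mul0r add0r; apply: eq_big_seq => c c_child; rewrite /tau /D /dprec card_V.
congr tilde_inv; apply: dprec_fuel_stable.
by rewrite card_V (depth_child tree c_child) addSn -addnS leq_addl.
Qed.

Lemma tilde_inv_ge0 (p s0 : R) : 0 <= p -> 0 <= tilde_inv p s0.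
Proof.
by rewrite /tilde_inv; case: eqP => // _ p_ge0; rewrite invr_ge0 addr_ge0 ?sqr_ge0 ?invr_ge0.
Qed.

Lemma dprec_ge0 v : 0 <= D v.
Proof.
elim/(tree_ind tree): v => v IHv; rewrite dprec_children addr_ge0 //.
  by rewrite divr_ge0 ?ler0n ?sqr_ge0.
by rewrite big_seq sumr_ge0 // => c c_child; apply/tilde_inv_ge0/IHv.
Qed.

Lemma q_gt0 v : 0 < q v.
Proof. by rewrite exprn_gt0. Qed.

Lemma s_gt0 : 0 < s.
Proof. by rewrite exprn_gt0. Qed.

Lemma shrink_denom_gt0 v : 0 < 1 + q v * D v.
Proof. by rewrite ltr_wpDr ?mulr_ge0 ?dprec_ge0 ?ltW ?q_gt0. Qed.

Lemma shrinkE v : shrink v = (1 + q v * D v)^-1.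
Proof.
have := q_gt0 v; have := shrink_denom_gt0 v.
rewrite /shrink /h /hat_var -/D -/(q v); move: (q v) (D v) => Q d ratio_gt0 Q_gt0.
by field; rewrite !gt_eqF.
Qed.

Lemma hat_varE v : h v = q v * shrink v.
Proof. by rewrite /shrink mulrC divfK // gt_eqF ?q_gt0. Qed.

Lemma tilde_invE v : tau v = D v * shrink v.
Proof.
rewrite /tau /tilde_inv shrinkE; case: eqP => [->|/eqP d_neq0]; first by rewrite mul0r.
have := shrink_denom_gt0 v; have := q_gt0 v; rewrite /q.
by move: (D v) d_neq0 => d d_neq0 Q_gt0 ratio_gt0; field; rewrite d_neq0 !gt_eqF.
Qed.

Lemma shrink_complement v : q v * D v * shrink v = 1 - shrink v.
Proof.
have := shrink_denom_gt0 v; rewrite shrinkE; move: (q v * D v) => t ratio_gt0.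
by field; rewrite gt_eqF.
Qed.

Lemma eq_mod_shrink v (l r k : R) :
  l - r = k * (q v * D v * shrink v - (1 - shrink v)) -> l = r.
Proof. by rewrite shrink_complement subrr mulr0 => /eqP; rewrite subr_eq0 => /eqP. Qed.

Variable a : V.

(* [cov_a v] is Cov(theta_v, theta_a | H_t) and [gain_a v], for v an ancestor of a, the posterior
   regression coefficient of theta_a on theta_v. *)
Let cov_a v := tree_cov pa shrink h v a.
Let gain_a v := path_gain pa shrink v a.
Let obs_sum v := \sum_(u <- acts) (ancb pa v u)%:R * cov_a u.

Lemma obs_sum_children v :
  obs_sum v = (nobs acts v)%:R * cov_a v + \sum_(c <- children v) obs_sum c.
Proof.
rewrite /obs_sum; under eq_bigr => u _ do rewrite (ancb_children tree R v u) mulrDl mulr_suml.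
by rewrite big_split /= sumr_eq_count exchange_big.
Qed.

Lemma child_balance v c : c \in children v ->
  D c * cov_a c - (ancb pa c a)%:R * gain_a c = tau c * cov_a v - (ancb pa c a)%:R * gain_a v.
Proof.
rewrite mem_children => /andP [/eqP <-{v} c_neq_root].
rewrite tilde_invE; case: (boolP (ancb pa c a)) => [c_a|c_na]; last first.
  by rewrite /cov_a (tree_cov_pa tree) // !mul0r mulrA.
have pc_a := ancb_trans tree (ancb_pa tree c) c_a.
rewrite /cov_a /gain_a (tree_cov_ancb tree _ _ c_a) (tree_cov_ancb tree _ _ pc_a).
rewrite (path_gain_trans tree _ (ancb_pa tree c) c_a) (path_gain_pa tree) //.
rewrite (tree_cov_pa_diag tree) // hat_varE.
by apply: (eq_mod_shrink (k := path_gain pa shrink c a)); rewrite /= /D; ring.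
Qed.

Lemma obs_sum_divE v :
  obs_sum v / s = (ancb pa v a)%:R - ((ancb pa v a)%:R * gain_a v - D v * cov_a v).
Proof.
elim/(tree_ind tree): v => v IHv.
have children_sum : \sum_(c <- children v) obs_sum c / s =
    ((ancb pa v a)%:R - (a == v)%:R) * (1 - gain_a v) + (\sum_(c <- children v) tau c) * cov_a v.
  rewrite (ancb_children tree R v a) [_ + \sum_(c <- _) _]addrC addrK.
  rewrite !mulr_suml -big_split; apply: eq_big_seq => c c_child /=.
  by rewrite IHv // opprB (child_balance c_child); ring.
have at_a : (a == v)%:R * (1 - gain_a v) = 0.
  by case: eqVneq => [<-|_]; rewrite ?mul0r // /gain_a path_gain_refl subrr mulr0.
rewrite obs_sum_children mulrDl mulr_suml children_sum mulrBl at_a subr0 dprec_children.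
by ring.
Qed.

Lemma tree_cov_step_root : cov_a root = q root * (gain_a root - D root * cov_a root).
Proof.
rewrite /cov_a /gain_a (tree_cov_ancb tree _ _ (ancb_root tree a)) (tree_cov_root tree) hat_varE.
by apply: (eq_mod_shrink (k := q root * path_gain pa shrink root a)); rewrite /D; ring.
Qed.

Lemma tree_cov_step v : v != root ->
  cov_a v - cov_a (pa v) = q v * ((ancb pa v a)%:R * gain_a v - D v * cov_a v).
Proof.
move=> v_neq_root; case: (boolP (ancb pa v a)) => [v_a|v_na]; last first.
  rewrite /cov_a (tree_cov_pa tree) //.
  by apply: (eq_mod_shrink (k := tree_cov pa shrink h (pa v) a)); rewrite /= /D; ring.
have pv_a := ancb_trans tree (ancb_pa tree v) v_a.
rewrite /cov_a /gain_a (tree_cov_ancb tree _ _ v_a) (tree_cov_ancb tree _ _ pv_a).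
rewrite (path_gain_trans tree _ (ancb_pa tree v) v_a) (path_gain_pa tree) //.
rewrite (tree_cov_pa_diag tree) // hat_varE.
move: (path_gain _ _ v a) (tree_cov _ _ _ (pa v) (pa v)) => g P.
by apply: (eq_mod_shrink (k := q v * g + g * shrink v * P)); rewrite /= /D; ring.
Qed.

Lemma prior_covE i j : prior_cov pa sigma0 i j = \sum_(k | ancb pa k i) q k * (ancb pa k j)%:R.
Proof.
rewrite /prior_cov big_mkcondr /=; apply: eq_bigr => k _.
by case: (ancb pa k j); rewrite ?mulr1 ?mulr0.
Qed.

Lemma tree_cov_sum_ancb v :
  cov_a v = \sum_(k | ancb pa k v) q k * ((ancb pa k a)%:R - obs_sum k / s).
Proof.
apply: (sum_ancb_telescope tree) => [|{}v v_neq_root]; rewrite obs_sum_divE subKr.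
  by rewrite (ancb_root tree) mul1r; exact: tree_cov_step_root.
exact: tree_cov_step.
Qed.

Lemma tree_cov_normal_eq v :
  cov_a v + (\sum_(u <- acts) prior_cov pa sigma0 v u * cov_a u) / s = prior_cov pa sigma0 v a.
Proof.
have -> : \sum_(u <- acts) prior_cov pa sigma0 v u * cov_a u =
    \sum_(k | ancb pa k v) q k * obs_sum k.
  under eq_bigr => u _ do rewrite prior_covE mulr_suml.
  rewrite exchange_big; apply: eq_bigr => k _.
  by rewrite /obs_sum mulr_sumr; apply: eq_bigr => u _; rewrite mulrA.
rewrite tree_cov_sum_ancb prior_covE mulr_suml -big_split; apply: eq_bigr => k _ /=.
by rewrite mulrBr -mulrA subrK.
Qed.

Lemma prior_cov_sym i j : prior_cov pa sigma0 i j = prior_cov pa sigma0 j i.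
Proof. by apply: eq_bigl => k; rewrite andbC. Qed.

Lemma obs_covE : obs_cov root pa sigma0 sigma acts =
  \matrix_(l, m) \sum_k q k * ((ancb pa k (nth root acts l))%:R * (ancb pa k (nth root acts m))%:R)
  + s%:M.
Proof.
apply/matrixP => l m; rewrite !mxE /prior_cov big_mkcond mulr_natl; congr (_ + _).
by apply: eq_bigr => k _; case: ancb; case: ancb; rewrite ?mulr1 ?mulr0.
Qed.

Lemma obs_cov_unitmx : obs_cov root pa sigma0 sigma acts \in unitmx.
Proof.
rewrite obs_covE psd_add_scalar_unitmx ?s_gt0 // => z.
by apply: gram_psd => k; apply/ltW/q_gt0.
Qed.

Lemma obs_cov_mulmx_tree_cov :
  obs_cov root pa sigma0 sigma acts *m \col_l cov_a (nth root acts l) =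
  s *: cross_cov root pa sigma0 acts a.
Proof.
apply/matrixP => l j; rewrite !mxE.
under eq_bigr => m _ do rewrite !mxE mulrDl.
rewrite big_split /= [X in _ + X](bigD1 l) //= eqxx mul1r.
rewrite [X in _ + (_ + X)]big1 => [|m m_neq_l]; last by rewrite eq_sym (negbTE m_neq_l) !mul0r.
rewrite addr0 prior_cov_sym -(tree_cov_normal_eq (nth root acts l)) mulrDr.
by rewrite [s * (_ / s)]mulrC divfK ?gt_eqF ?s_gt0 // addrC (big_nth root) big_mkord.
Qed.

Lemma post_var_tree_cov : post_var root pa sigma0 sigma acts a = cov_a a.
Proof.
have s_neq0 : s != 0 by rewrite gt_eqF ?s_gt0.
rewrite /post_var -mulmxA (invmx_mulmx_solve obs_cov_unitmx s_neq0 obs_cov_mulmx_tree_cov).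
rewrite -scalemxAr !mxE; under eq_bigr => l _ do rewrite !mxE.
by rewrite -(tree_cov_normal_eq a) (big_nth root) big_mkord mulrC addrK.
Qed.

End HierarchicalPosterior.

Theorem lemma2 (V : finType) (root : V) (pa : V -> V) (R : realFieldType)
    (sigma0 : V -> R) (sigma : R) (acts : seq V) (a : V) :
  is_rooted_tree root pa ->
  (forall i, 0 < sigma0 i) ->
  0 < sigma ->
  all (is_leaf root pa) acts ->
  is_leaf root pa a ->
  let psi := path_from_root root pa a in
  let L := size psi in
  post_var root pa sigma0 sigma acts a =
  \sum_(i < L)
     (\prod_(i.+1 <= j < L)
        (hat_var root pa sigma0 sigma acts (nth root psi j) ^+ 2
         / sigma0 (nth root psi j) ^+ 4))
     * hat_var root pa sigma0 sigma acts (nth root psi i).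
Proof.
(* The identity holds for every node a, not only for actions. *)
move=> tree sigma0_gt0 sigma_gt0 acts_leaves _ psi L.
rewrite (post_var_tree_cov tree sigma0_gt0 sigma_gt0 acts_leaves) (tree_cov_path tree).
apply: eq_bigr => i _; congr (_ * _); apply: eq_bigr => j _.
by rewrite /shrink expr_div_n -exprM.
Qed.
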